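(* Let $f:G\to H$ be a locally sectionable group homomorphism. Then $\sigma(H)\leq \mathrm{sec}(f)\leq \sigma_c(H)$. In particular, if $\sigma(H)=\sigma_c(H)$, then $\mathrm{sec}(f)=\sigma_c(H)=\sigma(H)$.
   Context: For a homomorphism $f:G\to H$ and a subgroup $L\le H$, a local section of $f$ on $L$ is a homomorphism $s:L\to G$ with $f\circ s=\mathrm{incl}_L$ (the inclusion $L\hookrightarrow H$). $f$ is locally sectionable if for every $b\in H$, $b\neq 1$, there is a subgroup $L\le H$ containing $b$ on which $f$ admits a local section. The sectional number $\mathrm{sec}(f)$ is the least positive integer $m$ such that there exist proper subgroups $H_1,\ldots,H_m$ of $H$ with $H=H_1\cup\cdots\cup H_m$ and such that $f$ admits a local section on each $H_i$; $\mathrm{sec}(f)=\infty$ if no such $m$ exists. The covering number $\sigma(H)$ is the least positive integer $m$ such that $H$ is a union of $m$ proper subgroups, and the cyclic covering number $\sigma_c(H)$ is the least positive integer $m$ such that $H$ is a union of $m$ cyclic proper subgroups (each being $\infty$ if no such $m$ exists). *)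

From Stdlib Require Import ZArith Arith ClassicalEpsilon.

Record Group := MkGroup {
  gcar :> Type;
  gmul : gcar -> gcar -> gcar;
  gone : gcar;
  ginv : gcar -> gcar;
  gmulA : forall x y z, gmul x (gmul y z) = gmul (gmul x y) z;
  gmul1g : forall x, gmul gone x = x;
  gmulg1 : forall x, gmul x gone = x;
  gmulVg : forall x, gmul (ginv x) x = gone;
  gmulgV : forall x, gmul x (ginv x) = gone
}.

Arguments gmul {g}.
Arguments gone {g}.
Arguments ginv {g}.

Definition is_hom {G H : Group} (f : G -> H) : Prop :=
  forall x y : G, f (gmul x y) = gmul (f x) (f y).

Definition is_subgroup {H : Group} (L : H -> Prop) : Prop :=
  L gone /\ (forall x y, L x -> L y -> L (gmul x y)) /\ (forall x, L x -> L (ginv x)).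

Definition is_proper {H : Group} (L : H -> Prop) : Prop := exists x : H, ~ L x.

Fixpoint npow {H : Group} (g : H) (n : nat) : H :=
  match n with O => gone | S n' => gmul g (npow g n') end.

Definition zpow {H : Group} (g : H) (z : Z) : H :=
  match z with
  | Z0 => gone
  | Zpos p => npow g (Pos.to_nat p)
  | Zneg p => ginv (npow g (Pos.to_nat p))
  end.

Definition is_cyclic_sub {H : Group} (L : H -> Prop) : Prop :=
  exists g : H, forall x, L x <-> exists z : Z, x = zpow g z.

(* a local section of f on L: a homomorphism s : L -> G with f (s x) = x on L.
   It is represented by a function H -> G whose values outside L are irrelevant. *)
Definition local_section {G H : Group} (f : G -> H) (L : H -> Prop) (s : H -> G) : Prop :=
  (forall x y, L x -> L y -> s (gmul x y) = gmul (s x) (s y)) /\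
  (forall x, L x -> f (s x) = x).

Definition has_local_section {G H : Group} (f : G -> H) (L : H -> Prop) : Prop :=
  exists s : H -> G, local_section f L s.

Definition locally_sectionable {G H : Group} (f : G -> H) : Prop :=
  forall b : H, b <> gone ->
    exists L : H -> Prop, is_subgroup L /\ L b /\ has_local_section f L.

Definition covered_by {H : Group} (P : (H -> Prop) -> Prop) (m : nat) : Prop :=
  exists Hs : nat -> (H -> Prop),
    (forall i, i < m -> is_subgroup (Hs i) /\ is_proper (Hs i) /\ P (Hs i)) /\
    (forall x : H, exists i, i < m /\ Hs i x).

(* extended naturals: None = infinity *)
Definition enat := option nat.

Definition ele (a b : enat) : Prop :=
  match a, b with
  | _, None => True
  | None, Some _ => False
  | Some m, Some n => m <= n
  end.

Definition is_least_pos (Q : nat -> Prop) (o : enat) : Prop :=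
  match o with
  | Some m => 0 < m /\ Q m /\ (forall k, 0 < k -> Q k -> m <= k)
  | None => forall k, 0 < k -> ~ Q k
  end.

Definition least_pos (Q : nat -> Prop) : enat :=
  epsilon (inhabits None) (is_least_pos Q).

Definition sigma_cov (H : Group) : enat :=
  least_pos (covered_by (H := H) (fun _ => True)).

Definition sigma_c (H : Group) : enat :=
  least_pos (covered_by (H := H) is_cyclic_sub).

Definition sec_num {G H : Group} (f : G -> H) : enat :=
  least_pos (covered_by (H := H) (has_local_section f)).

From Stdlib Require Import ZArith Arith Classical ClassicalEpsilon.

(* Every cover of H by proper subgroups carrying local sections is in particular
   a cover by proper subgroups, whence sigma(H) <= sec(f).  Conversely, a cyclic
   subgroup <g> with g <> 1 lies in some subgroup containing g on which f has a
   local section, and restricting that section to <g> shows that every cover by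
   proper cyclic subgroups is a sectional cover, whence sec(f) <= sigma_c(H). *)

Lemma is_least_pos_exists (Q : nat -> Prop) : exists o, is_least_pos Q o.
Proof.
  destruct (classic (exists k, 0 < k /\ Q k)) as [[n [n_gt0 Qn]] | noQ].
  - revert n_gt0 Qn.
    induction n as [n IH] using (well_founded_induction lt_wf); intros n_gt0 Qn.
    destruct (classic (exists k, k < n /\ 0 < k /\ Q k))
      as [[k [lt_kn [k_gt0 Qk]]] | n_min].
    + exact (IH k lt_kn k_gt0 Qk).
    + exists (Some n); repeat split; auto.
      intros k k_gt0 Qk; destruct (Nat.lt_ge_cases k n) as [lt_kn | le_nk]; auto.
      exfalso; eauto.
  - exists None; intros k k_gt0 Qk; eauto.
Qed.

Lemma least_pos_spec (Q : nat -> Prop) : is_least_pos Q (least_pos Q).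
Proof. unfold least_pos; apply epsilon_spec, is_least_pos_exists. Qed.

Lemma ele_least_pos (Q Q' : nat -> Prop) :
  (forall k, Q k -> Q' k) -> ele (least_pos Q') (least_pos Q).
Proof.
  intros QQ'; pose proof (least_pos_spec Q) as LQ; pose proof (least_pos_spec Q') as LQ'.
  destruct (least_pos Q) as [m|], (least_pos Q') as [m'|]; simpl in *; auto.
  - destruct LQ as [m_gt0 [Qm _]], LQ' as [_ [_ min']]; auto.
  - destruct LQ as [m_gt0 [Qm _]]; exact (LQ' m m_gt0 (QQ' m Qm)).
Qed.

Lemma ele_antisym (a b : enat) : ele a b -> ele b a -> a = b.
Proof.
  destruct a as [m|], b as [n|]; simpl; try contradiction; auto.
  intros le_mn le_nm; f_equal; exact (Nat.le_antisymm _ _ le_mn le_nm).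
Qed.

Lemma covered_by_mono {H : Group} (P P' : (H -> Prop) -> Prop) (m : nat) :
  (forall L, is_subgroup L -> is_proper L -> P L -> P' L) ->
  covered_by P m -> covered_by P' m.
Proof.
  intros PP' [Hs [HsP cover]]; exists Hs; split; [|exact cover].
  intros i lt_im; destruct (HsP i lt_im) as [sub [proper PHi]]; auto.
Qed.

Lemma gmul_idem_one {H : Group} (x : H) : gmul x x = x -> x = gone.
Proof.
  intros xx; rewrite <- (gmulVg H x); rewrite <- xx at 3.
  now rewrite gmulA, gmulVg, gmul1g.
Qed.

Lemma hom1 {G H : Group} (f : G -> H) : is_hom f -> f gone = gone.
Proof. intros fM; apply gmul_idem_one; now rewrite <- fM, gmul1g. Qed.

Lemma inv1 {H : Group} : ginv (gone (g := H)) = gone.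
Proof. rewrite <- (gmulg1 H (ginv gone)); apply gmulVg. Qed.

Lemma zpow1 {H : Group} (z : Z) : zpow (gone (g := H)) z = gone.
Proof.
  assert (npow1 : forall n, npow (gone (g := H)) n = gone).
  { induction n as [|n IHn]; simpl; [|rewrite IHn, gmul1g]; reflexivity. }
  destruct z; simpl; rewrite ?npow1, ?inv1; reflexivity.
Qed.

Lemma subgroup_zpow {H : Group} (L : H -> Prop) (g : H) (z : Z) :
  is_subgroup L -> L g -> L (zpow g z).
Proof.
  intros [L1 [LM LV]] Lg.
  assert (Lnpow : forall n, L (npow g n)) by (induction n; simpl; auto).
  destruct z; simpl; auto.
Qed.

Lemma local_section_sub {G H : Group} (f : G -> H) (L L' : H -> Prop) (s : H -> G) :
  (forall x, L x -> L' x) -> local_section f L' s -> local_section f L s.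
Proof. intros LL' [sM fs]; split; auto. Qed.

Lemma has_local_section_trivial {G H : Group} (f : G -> H) (L : H -> Prop) :
  is_hom f -> (forall x, L x -> x = gone) -> has_local_section f L.
Proof.
  intros fM L1; exists (fun _ => gone); split.
  - intros x y _ _; symmetry; apply gmul1g.
  - intros x Lx; rewrite (L1 x Lx); exact (hom1 f fM).
Qed.

Lemma has_local_section_cyclic {G H : Group} (f : G -> H) (L : H -> Prop) :
  is_hom f -> locally_sectionable f -> is_cyclic_sub L -> has_local_section f L.
Proof.
  intros fM f_loc [g L_gen].
  destruct (classic (g = gone)) as [-> | g_ne1].
  - apply (has_local_section_trivial f L fM).
    intros x Lx; destruct (proj1 (L_gen x) Lx) as [z ->]; apply zpow1.
  - destruct (f_loc g g_ne1) as [L' [L'_sub [L'g [s s_sec]]]].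
    exists s; apply (local_section_sub f L L' s); [|exact s_sec].
    intros x Lx; destruct (proj1 (L_gen x) Lx) as [z ->].
    now apply subgroup_zpow.
Qed.

Theorem corollary2p21 (G H : Group) (f : G -> H) :
  is_hom f -> locally_sectionable f ->
  ele (sigma_cov H) (sec_num f) /\ ele (sec_num f) (sigma_c H) /\
  (sigma_cov H = sigma_c H -> sec_num f = sigma_c H /\ sigma_c H = sigma_cov H).
Proof.
  intros fM f_loc.
  assert (cov_le_sec : ele (sigma_cov H) (sec_num f)).
  { apply ele_least_pos; intros k; apply covered_by_mono; auto. }
  assert (sec_le_cyc : ele (sec_num f) (sigma_c H)).
  { apply ele_least_pos; intros k; apply covered_by_mono.
    intros L _ _; exact (has_local_section_cyclic f L fM f_loc). }
  split; [exact cov_le_sec | split; [exact sec_le_cyc |]].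
  intros cov_cyc; split; [|symmetry; exact cov_cyc].
  rewrite cov_cyc in cov_le_sec.
  exact (ele_antisym _ _ sec_le_cyc cov_le_sec).
Qed.
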